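(* Let $a<b$ be real numbers, $I=(a,b)$, and let $(X_t)_{t\in[0,1]}$ be a real-valued stochastic process with continuous sample paths such that $\mathbb{P}(X_t\in I)\le\epsilon$ for each $t\in[0,1]$. Suppose there exist $\alpha,\beta>0$ such that for all $\theta,\delta>0$, $\mathbb{P}(\kappa_X(\delta)\ge\theta)\lesssim\delta^\alpha/\theta^\beta$. Then $$\mathbb{P}\big(N_X(a,b)\ge1\big)\lesssim\Big(\frac{\epsilon^\alpha}{(b-a)^\beta}\Big)^{\frac{1}{\alpha+1}},$$ where the implicit constant depends on $\alpha$ (and on the implicit constant in the hypothesis).
   Context: The modulus of continuity of the process is the random variable $\kappa_X(\delta;\omega)=\sup\{|X_t(\omega)-X_s(\omega)|: t,s\in[0,1],\,|t-s|\le\delta\}$. The up-crossing number is $N_X(a,b;\omega)=\sup\{n\in\mathbb{N}:\exists\,t_1<s_1<t_2<s_2<\dots<t_n<s_n\in[0,1]\text{ with }X_{t_i}(\omega)\le a<b\le X_{s_i}(\omega)\text{ for each }i\}$. $\lesssim$ means inequality up to a multiplicative constant. *)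

From HB Require Import structures.
From mathcomp Require Import all_boot all_order all_algebra.
From mathcomp Require Import all_classical all_reals all_analysis.
Set Implicit Arguments. Unset Strict Implicit. Unset Printing Implicit Defensive.
Import Order.TTheory GRing.Theory Num.Def Num.Theory numFieldNormedType.Exports.
Local Open Scope classical_set_scope.
Local Open Scope ring_scope.

(* A real-valued process (X_t)_{t in [0,1]} on a sample space T is represented
   by X : R -> T -> R; only the values X t for t in [0,1] are ever used. *)

Definition modulus {R : realType} {T : Type} (X : R -> T -> R) (delta : R) (w : T)
  : \bar R :=
  ereal_sup [set x : \bar R | exists t s : R,
    [/\ 0 <= t <= 1, 0 <= s <= 1, `|t - s| <= delta & x = (`|X t w - X s w|)%:E]].

Definition has_upcrossings {R : realType} {T : Type} (X : R -> T -> R)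
  (a b : R) (w : T) (n : nat) : Prop :=
  exists t s : nat -> R,
    (forall i, (i < n)%N ->
       [/\ 0 <= t i, t i < s i, s i <= 1, X (t i) w <= a & b <= X (s i) w]) /\
    (forall i, (i.+1 < n)%N -> s i < t i.+1).

Definition upcrossings {R : realType} {T : Type} (X : R -> T -> R)
  (a b : R) (w : T) : \bar R :=
  ereal_sup [set (n%:R)%:E | n in [set n : nat | has_upcrossings X a b w n]].

(* If the path crosses from below a to above b but none of its values on the
   grid k / (n + 1), k <= n + 1, lies in ]a, b[, then consecutive grid values
   lie on the same side of ]a, b[, and since the grid points nearest to the
   two crossing times lie on opposite sides, the path must oscillate by at
   least b - a between two times at distance 1 / (n + 1).  Hence
     P(N >= 1) <= P(kappa(1/(n+1)) >= b - a) + (n + 2) eps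
              <= C (n + 1)^-alpha (b - a)^-beta + (n + 2) eps,
   and also P(N >= 1) <= P(kappa(1) >= b - a) <= C (b - a)^-beta.  Taking
   n + 1 of order ((b - a)^-beta / eps)^(1 / (alpha + 1)) balances the two
   terms.  The events involved are measurable because, by continuity of the
   paths, they are determined by the values of the process at rational times. *)

From HB Require Import structures.
From mathcomp Require Import all_boot all_order all_algebra.
From mathcomp Require Import all_classical all_reals all_analysis.
From mathcomp Require Import ring lra.
Import Order.TTheory GRing.Theory Num.Def Num.Theory numFieldNormedType.Exports.
Local Open Scope classical_set_scope.
Local Open Scope ring_scope.

Section optimization.
Context {R : realType}.
Implicit Types al c p x y : R.

Lemma powR_inv (m a : R) : 0 <= m -> m^-1 `^ a = (m `^ a)^-1.
Proof.
by move=> m0; rewrite -[m^-1]powR_inv1 // powRAC powR_inv1 // powR_ge0.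
Qed.

Lemma powR_invK x al : 0 <= x -> 0 < al -> (x `^ al^-1) `^ al = x.
Proof. by move=> x0 al0; rewrite -powRrM mulVf ?gt_eqF // powRr1. Qed.

Lemma le0_of_le_powR_inv {al c p} : 0 < al -> 0 <= c ->
  (forall n : nat, p <= c * n.+1%:R^-1 `^ al) -> p <= 0.
Proof.
move=> al0 c0 hp; rewrite leNgt; apply/negP => p0.
set y := (c / p) `^ al^-1.
have := hp (truncn y); have := truncnS_gt y; move: (truncn y).+1%:R => m ym.
have m0 : 0 < m by apply: le_lt_trans ym; rewrite powR_ge0.
have : c / p < m `^ al.
  rewrite -(@powR_invK (c / p) al) //; last by rewrite divr_ge0 // ltW.
  by apply: gt0_ltr_powR; rewrite ?nnegrE ?powR_ge0 ?ltW.
rewrite ltr_pdivrMr // (powR_inv m al (ltW m0)) ler_pdivlMr ?powR_gt0 // => cpm.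
by rewrite mulrC leNgt cpm.
Qed.

Lemma le_balanced_bound al c x y p : 0 < al -> 0 <= c -> 0 < x -> 0 < y ->
  p <= c * y `^ (al + 1) ->
  (forall n : nat, p <= c * n.+1%:R^-1 `^ al * y `^ (al + 1) + n.+2%:R * x `^ (al + 1)) ->
  p <= (c + 3) * (x `^ al * y).
Proof.
move=> al0 c0 x0 y0 hp1 hp.
have powS (z : R) : 0 < z -> z `^ (al + 1) = z `^ al * z.
  by move=> z0; rewrite powRD ?(gt_eqF z0) ?implybT // powRr1 // ltW.
have xy0 : 0 <= x `^ al * y by rewrite mulr_ge0 ?powR_ge0 // ltW.
have [yx|xy] := leP y x.
  apply: (le_trans hp1); rewrite powS //.
  apply: (@le_trans _ _ (c * (x `^ al * y))); last by apply: ler_wpM2r; rewrite // lerDl.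
  apply: ler_wpM2l => //; apply: ler_wpM2r; first exact: ltW.
  by apply: ge0_ler_powR => //; rewrite ?nnegrE ltW.
have x0' := ltW x0; have y0' := ltW y0.
(* m := n + 1 is the least integer above y / x: both terms are then of order
   x ^ al * y. *)
apply: (le_trans (hp (truncn (y / x)))); rewrite -[_.+2%:R]natr1.
have := truncnS_gt (y / x); set m := (truncn (y / x)).+1%:R => ym.
have m0 : 0 < m by rewrite ltr0n.
rewrite [in X in _ <= X]mulrDl; apply: lerD.
  have : (y / x) `^ al <= m `^ al.
    by apply: ge0_ler_powR; rewrite ?nnegrE ?divr_ge0 // ltW.
  rewrite powRM ?invr_ge0 // (powR_inv _ _ x0') ler_pdivrMr ?powR_gt0 // => ymx.
  rewrite mulrAC -mulrA; apply: ler_wpM2l => //.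
  by rewrite (powR_inv _ _ (ltW m0)) powS // ler_pdivrMr ?powR_gt0 //; nra.
have mx : (m + 1) * x <= 3 * y.
  have : m <= y / x + 1 by rewrite /m -natr1 lerD2r truncn_le divr_ge0.
  by rewrite -(ler_pM2r x0) mulrDl divfK ?gt_eqF //; lra.
rewrite powS // mulrCA [3 * _]mulrCA; apply: ler_wpM2l => //; exact: powR_ge0.
Qed.

Lemma le_powR_balance al c e u p : 0 < al -> 0 <= c -> 0 <= e -> 0 < u ->
  p <= c * u -> (forall n : nat, p <= c * n.+1%:R^-1 `^ al * u + n.+2%:R * e) ->
  p <= (c + 3) * (e `^ al * u) `^ (al + 1)^-1.
Proof.
move=> al0 c0 e0 u0 hp1 hp.
have al1 : 0 < al + 1 by rewrite addr_gt0.
have [e_eq0|e_neq0] := eqVneq e 0.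
  move: hp; rewrite e_eq0 => hp.
  rewrite powR0 ?gt_eqF // mul0r powR0 ?invr_neq0 ?gt_eqF // mulr0.
  apply: (le0_of_le_powR_inv al0 (mulr_ge0 c0 (ltW u0))) => n.
  by have := hp n; rewrite mulr0 addr0 mulrAC.
have e_gt0 : 0 < e by rewrite lt_def e_neq0.
have powK z : 0 <= z -> (z `^ (al + 1)^-1) `^ (al + 1) = z.
  by move=> z0; apply: powR_invK.
rewrite powRM ?powR_ge0 ?(ltW u0) // powRAC.
by apply: le_balanced_bound; rewrite ?powR_gt0 ?powK ?(ltW u0) ?(ltW e_gt0).
Qed.

End optimization.

Section grid.
Context {R : realType}.

Definition grid (n k : nat) : R := k%:R / n.+1%:R.

Lemma grid_itv {n k} : (k < n.+2)%N -> 0 <= grid n k <= 1.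
Proof.
by move=> kn; rewrite divr_ge0 //= ler_pdivrMr ?ltr0n // mul1r ler_nat -ltnS.
Qed.

Lemma gridSB n k : grid n k.+1 - grid n k = n.+1%:R^-1.
Proof. by rewrite -mulrBl -natr1 addrAC subrr add0r mul1r. Qed.

Lemma grid_near n {t : R} : 0 <= t <= 1 ->
  exists2 k, (k < n.+2)%N & `|grid n k - t| <= n.+1%:R^-1.
Proof.
move=> /andP[t0 t1]; have n0 : 0 < n.+1%:R :> R by rewrite ltr0n.
have tn0 : 0 <= t * n.+1%:R by rewrite mulr_ge0 // ltW.
exists (truncn (t * n.+1%:R)).
  rewrite ltnS truncn_le_nat; apply: (le_lt_trans (ler_piMl _ t1)).
    exact: ltW.
  by rewrite ltr_nat.
rewrite distrC ger0_norm; last by rewrite subr_ge0 ler_pdivrMr // truncn_le.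
rewrite lerBlDl -(ler_pM2r n0) mulrDl mulVf ?gt_eqF // divfK ?gt_eqF //.
by rewrite natr1; exact: ltW (truncnS_gt _).
Qed.

End grid.

Section crossing_a_grid.
Context {R : realType}.
Implicit Types (a b x y : R) (f : R -> R).

Definition crosses f a b := exists t s : R,
  [/\ 0 <= t, t < s, s <= 1, f t <= a & b <= f s].

Lemma same_side a b x y : ~~ (a < x < b) -> ~~ (a < y < b) ->
  `|x - y| < b - a -> (x <= a) = (y <= a).
Proof.
rewrite !negb_and -!leNgt ltr_norml => hx hy /andP[h1 h2].
by apply/idP/idP => ?; case/orP: hx => ?; case/orP: hy => ?; lra.
Qed.

Lemma crosses_grid {f a b} n : a < b -> crosses f a b ->
  (forall t s, 0 <= t <= 1 -> 0 <= s <= 1 -> `|t - s| <= n.+1%:R^-1 ->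
     `|f t - f s| < b - a) ->
  exists2 k, (k < n.+2)%N & a < f (grid n k) < b.
Proof.
move=> ab [t [s [t0 ts s1 fta bfs]]] osc; apply: contrapT => no_k.
have off k : (k < n.+2)%N -> ~~ (a < f (grid n k) < b).
  by move=> kn; apply/negP => ?; apply: no_k; exists k.
have side k : (k < n.+2)%N -> (f (grid n k) <= a) = (f (grid n 0) <= a).
  elim: k => [//|k IH] kn; rewrite -IH ?(ltnW kn) //.
  apply: same_side; [exact: off | exact: off (ltnW kn) |].
  apply: osc; rewrite ?grid_itv ?(ltnW kn) //.
  by rewrite gridSB ger0_norm // invr_ge0.
have t01 : 0 <= t <= 1 by rewrite t0 (le_trans (ltW ts) s1).
have s01 : 0 <= s <= 1 by rewrite s1 (le_trans t0 (ltW ts)).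
have [kt ktn ht] := grid_near n t01; have [ks ksn hs] := grid_near n s01.
have ft : (f (grid n kt) <= a) = (f t <= a).
  apply: (@same_side a b); [exact: off | by rewrite negb_and -leNgt fta |].
  exact: osc _ _ (grid_itv ktn) t01 ht.
have fs : (f (grid n ks) <= a) = (f s <= a).
  apply: (@same_side a b); [exact: off | by rewrite negb_and -!leNgt bfs orbT |].
  exact: osc _ _ (grid_itv ksn) s01 hs.
move: ft fs; rewrite !side // fta => ->.
by rewrite leNgt (lt_le_trans ab bfs).
Qed.

End crossing_a_grid.

Section modulus_and_crossings.
Context {R : realType} {T : Type} (X : R -> T -> R).

Lemma le_modulus delta w t s : 0 <= t <= 1 -> 0 <= s <= 1 -> `|t - s| <= delta ->
  ((`|X t w - X s w|)%:E <= modulus X delta w)%E.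
Proof. by move=> t01 s01 ts; apply: ereal_sup_ubound; exists t, s. Qed.

Lemma modulus_lt {theta delta w} : ~ (theta%:E <= modulus X delta w)%E ->
  forall t s, 0 <= t <= 1 -> 0 <= s <= 1 -> `|t - s| <= delta ->
  `|X t w - X s w| < theta.
Proof.
move=> /negP; rewrite -ltNge => lt_mod t s t01 s01 ts.
by rewrite -lte_fin; apply: le_lt_trans lt_mod; apply: le_modulus.
Qed.

Lemma upcrossings_ge1 a b w :
  (1 <= upcrossings X a b w)%E <-> crosses (X^~ w) a b.
Proof.
split=> [|[t [s cross]]]; last first.
  apply: ereal_sup_ubound; exists 1%N => //.
  by exists (fun=> t), (fun=> s); split=> [[]|].
apply: contraPP => no_cross; apply/negP; rewrite -ltNge.
apply: (le_lt_trans _ lte01); apply: ge_ereal_sup => _ [[|n] [t [s [cross _]]] <-].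
  by rewrite lee_fin.
by case: no_cross; exists (t 0%N), (s 0%N); apply: cross.
Qed.

Lemma crosses_sub_modulus a b delta : 1 <= delta ->
  [set w | crosses (X^~ w) a b] `<=` [set w | ((b - a)%:E <= modulus X delta w)%E].
Proof.
move=> delta1 w [t [s [t0 ts s1 ta bs]]] /=.
have t01 : 0 <= t <= 1 by rewrite t0 (le_trans (ltW ts) s1).
have s01 : 0 <= s <= 1 by rewrite s1 (le_trans t0 (ltW ts)).
apply: le_trans (le_modulus delta w s t s01 t01 _).
  by rewrite lee_fin (le_trans _ (ler_norm _)) // lerB.
by rewrite gtr0_norm ?subr_gt0 //; lra.
Qed.

Lemma crosses_sub_modulus_grid {a b} n : a < b ->
  [set w | crosses (X^~ w) a b] `<=`
  [set w | ((b - a)%:E <= modulus X n.+1%:R^-1 w)%E] `|`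
  \bigcup_(k in `I_n.+2) (X (grid n k) @^-1` `]a, b[).
Proof.
move=> ab w cross.
have [|small] := pselect ((b - a)%:E <= modulus X n.+1%:R^-1 w)%E; first by left.
right; have [k kn fk] := crosses_grid n ab cross (modulus_lt small).
by exists k => //=; rewrite in_itv.
Qed.

End modulus_and_crossings.

Lemma lee_of_lt_subn {R : realType} (x : R) (z : \bar R) :
  (forall m : nat, ((x - m.+1%:R^-1)%:E < z)%E) -> (x%:E <= z)%E.
Proof.
move=> lt_z; apply/lee_subgt0Pr => e e0.
have [m me] := ltr_add_invr e0; rewrite add0r in me.
apply: le_trans (ltW (lt_z m)); rewrite -EFinB lee_fin lerB //; exact: ltW.
Qed.

Section rational_approximation.
Context {R : realType}.
Implicit Types (f : R -> R) (A : set R).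

Lemma continuous_within_ball {A f t e} :
  {within A, continuous f} -> A t -> 0 < e ->
  exists2 eta, 0 < eta & forall y, A y -> `|y - t| < eta -> `|f y - f t| < e.
Proof.
move=> fA At e0; have := fA t; rewrite /continuous_at.
have [_|//] := nbhs_subspaceP A t.
move=> /cvgrPdist_lt /(_ e e0).
rewrite near_withinE => /nbhs_ballP[eta /= eta0 near_t].
exists eta => // y Ay yt; rewrite distrC; apply: near_t => //.
by rewrite /ball /= distrC.
Qed.

Lemma exists_rat_near {p q t eta : R} : p < q -> p <= t <= q -> 0 < eta ->
  exists r : rat, p <= ratr r <= q /\ `|ratr r - t| < eta.
Proof.
move=> pq /andP[pt tq] eta0.
have /rat_in_itvoo[r] : Num.max p (t - eta) < Num.min q (t + eta).
  by rewrite gt_max !lt_min; apply/andP; split; apply/andP; split; lra.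
rewrite in_itv /= gt_max lt_min => /andP[/andP[pr tr] /andP[rq rt]].
by exists r; rewrite ltr_norml; split; [apply/andP; split|apply/andP; split]; lra.
Qed.

Lemma exists_rat_pair_near {f} {delta theta t s : R} :
  {within `[0, 1], continuous f} -> 0 <= t <= 1 -> 0 <= s <= 1 ->
  `|t - s| <= delta -> theta < `|f t - f s| ->
  exists r1 r2 : rat, [/\ 0 <= (ratr r1 : R) <= 1, 0 <= (ratr r2 : R) <= 1,
    `|ratr r1 - ratr r2| <= delta & theta < `|f (ratr r1) - f (ratr r2)|].
Proof.
move=> cf; wlog ts : t s / t <= s.
  move=> hwlog t01 s01 tsd fts.
  have [ts|st] := leP t s; first exact: hwlog ts t01 s01 tsd fts.
  rewrite distrC [`|f t - _|]distrC in tsd fts.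
  have [r1 [r2 [r1_01 r2_01 r12 fr12]]] := hwlog s t (ltW st) s01 t01 tsd fts.
  by exists r2, r1; split; rewrite // distrC.
move=> t01 s01 tsd fts; move: ts; rewrite le_eqVlt => /predU1P[eq_ts|ts].
  exists 0%Q, 0%Q; rewrite rmorph0 !subrr !normr0 lexx ler01.
  by rewrite -eq_ts !subrr !normr0 in tsd fts.
set gamma := (`|f t - f s| - theta) / 2.
have gamma0 : 0 < gamma by rewrite divr_gt0 // subr_gt0.
have [eta_t eta_t0 near_t] := continuous_within_ball cf t01 gamma0.
have [eta_s eta_s0 near_s] := continuous_within_ball cf s01 gamma0.
have eta0 : 0 < Num.min eta_t eta_s by rewrite lt_min eta_t0 eta_s0.
have [r1 [/andP[tr1 r1m]]] : exists r : rat,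
    t <= ratr r <= (t + s) / 2 /\ `|ratr r - t| < Num.min eta_t eta_s.
  by apply: exists_rat_near => //; rewrite ?lexx /=; lra.
rewrite lt_min => /andP[r1t _].
have [r2 [/andP[mr2 r2s]]] : exists r : rat,
    (t + s) / 2 <= ratr r <= s /\ `|ratr r - s| < Num.min eta_t eta_s.
  by apply: exists_rat_near => //; rewrite ?lexx ?andbT; lra.
rewrite lt_min => /andP[_ r2s'].
move: t01 s01 tsd => /andP[t0 t1] /andP[s0 s1].
rewrite distrC gtr0_norm ?subr_gt0 // => tsd.
have r1_01 : 0 <= (ratr r1 : R) <= 1 by apply/andP; split; lra.
have r2_01 : 0 <= (ratr r2 : R) <= 1 by apply/andP; split; lra.
exists r1, r2; split => //; first by rewrite ler0_norm; lra.
have := near_t _ r1_01 r1t; have := near_s _ r2_01 r2s'.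
have := ler_distD (f (ratr r1)) (f t) (f s).
have := ler_distD (f (ratr r2)) (f (ratr r1)) (f s).
by rewrite [`|f t - f (ratr r1)|]distrC /gamma; lra.
Qed.

End rational_approximation.

Section measurability.
Context {d : measure_display} {T : measurableType d} {R : realType}.
Variable X : R -> T -> R.
Hypothesis mX : forall t, 0 <= t <= 1 -> measurable_fun setT (X t).
Hypothesis cX : forall w, {within `[0, 1], continuous (X^~ w)}.

Lemma measurable_marginal_preimage t (B : set R) : 0 <= t <= 1 -> measurable B ->
  measurable (X t @^-1` B).
Proof. by move=> t01 mB; rewrite -[_ @^-1` _]setTI; exact: mX. Qed.

Lemma measurable_exists_le {p q c : R} : 0 <= p -> p < q -> q <= 1 ->
  measurable [set w | exists2 t, p <= t <= q & X t w <= c].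
Proof.
move=> p0 pq q1.
suff -> : [set w | exists2 t, p <= t <= q & X t w <= c] =
    \bigcap_m \bigcup_(r : rat) if p <= ratr r <= q
      then X (ratr r) @^-1` `]-oo, c + m.+1%:R^-1[ else set0.
  apply: bigcapT_measurable => m; apply: bigcupT_measurable_rat => r.
  case: ifP => [/andP[pr rq]|_]; last exact: measurable0.
  by apply: measurable_marginal_preimage => //; apply/andP; split; lra.
apply/seteqP; split => w /=.
  move=> [t /andP[pt tq] Xtc] m _.
  have t01 : 0 <= t <= 1 by apply/andP; split; lra.
  have e0 : 0 < m.+1%:R^-1 :> R by rewrite invr_gt0.
  have [eta eta0 near_t] := continuous_within_ball (cX w) t01 e0.
  have [r [/andP[pr rq] rt]] := exists_rat_near pq (introT andP (conj pt tq)) eta0.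
  exists r => //; rewrite pr rq /= in_itv /=.
  have r01 : 0 <= (ratr r : R) <= 1 by apply/andP; split; lra.
  move: (near_t _ r01 rt); set e := m.+1%:R^-1.
  by rewrite ltr_norml => /andP[_ ?]; lra.
move=> near_c.
have sub : `[p, q] `<=` `[0, 1].
  by move=> x /=; rewrite !in_itv /= => /andP[px xq]; apply/andP; split; lra.
have [t] := EVT_min (ltW pq) (continuous_subspaceW sub (cX w)).
rewrite in_itv /= => tpq tmin; exists t => //.
rewrite -lee_fin; apply: lee_of_lt_subn => m; rewrite lte_fin ltrBlDr.
have [r _] := near_c m I; case: ifP => // /andP[pr rq]; rewrite /= in_itv /= => Xr.
by apply: le_lt_trans Xr; apply: tmin; rewrite in_itv /= pr rq.
Qed.

Lemma measurable_modulus_ge theta delta :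
  measurable [set w | (theta%:E <= modulus X delta w)%E].
Proof.
suff -> : [set w | (theta%:E <= modulus X delta w)%E] =
    \bigcap_m \bigcup_(r1 : rat) \bigcup_(r2 : rat)
      if [&& 0 <= (ratr r1 : R) <= 1, 0 <= (ratr r2 : R) <= 1
           & `|ratr r1 - ratr r2| <= delta]
      then (fun w => `|X (ratr r1) w - X (ratr r2) w|) @^-1`
             `]theta - m.+1%:R^-1, +oo[
      else set0.
  apply: bigcapT_measurable => m; do 2 apply: bigcupT_measurable_rat => ?.
  case: ifP => [/and3P[r1_01 r2_01 _]|_]; last exact: measurable0.
  rewrite -[_ @^-1` _]setTI; apply: measurableT_comp => //.
  by apply: measurable_realfun.measurable_funB; apply: mX.
apply/seteqP; split => w /=.
  move=> theta_le m _.
  have : ((theta - m.+1%:R^-1)%:E < modulus X delta w)%E.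
    by apply: lt_le_trans theta_le; rewrite lte_fin gtrDl oppr_lt0 invr_gt0.
  case/ereal_sup_gt => _ [t [s [t01 s01 ts ->]]]; rewrite lte_fin => lt_ts.
  have [r1 [r2 [r1_01 r2_01 r12 lt_r12]]] :=
    exists_rat_pair_near (cX w) t01 s01 ts lt_ts.
  by exists r1 => //; exists r2 => //; rewrite r1_01 r2_01 r12 /= in_itv /= andbT.
move=> near_theta; apply: lee_of_lt_subn => m.
have [r1 _ [r2 _]] := near_theta m I.
case: ifP => // /and3P[r1_01 r2_01 r12]; rewrite /= in_itv /= andbT => lt_r12.
by apply: (lt_le_trans _ (le_modulus X _ _ _ _ r1_01 r2_01 r12)); rewrite lte_fin.
Qed.

End measurability.

Section crossing_event.
Context {d : measure_display} {T : measurableType d} {R : realType}.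
Variable X : R -> T -> R.
Hypothesis mX : forall t, 0 <= t <= 1 -> measurable_fun setT (X t).
Hypothesis cX : forall w, {within `[0, 1], continuous (X^~ w)}.

Lemma measurable_crosses {a b} : a < b -> measurable [set w | crosses (X^~ w) a b].
Proof.
move=> ab.
have mNX t : 0 <= t <= 1 -> measurable_fun setT (fun w => - X t w).
  by move=> t01; apply: measurable_realfun.measurable_funN; exact: mX.
have cNX w : {within `[0, 1], continuous (fun t => - X t w)}.
  by move=> t; apply: cvgN; exact: cX.
suff -> : [set w | crosses (X^~ w) a b] = \bigcup_(g : rat)
    if 0 < (ratr g : R) < 1 then
      [set w | exists2 t, 0 <= t <= ratr g & X t w <= a] `&`
      [set w | exists2 s, ratr g <= s <= 1 & - X s w <= - b]
    else set0.
  apply: bigcupT_measurable_rat => g.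
  case: ifP => [/andP[g0 g1]|_]; last exact: measurable0.
  apply: measurableI; first by apply: measurable_exists_le => //; exact: ltW.
  exact: (measurable_exists_le _ mNX cNX (ltW g0) g1 (lexx 1)).
apply/seteqP; split => w /=.
  move=> [t [s [t0 ts s1 ta bs]]].
  have /rat_in_itvoo[g] := ts; rewrite in_itv /= => /andP[tg gs].
  exists g => //; rewrite ifT; last first.
    by rewrite (le_lt_trans t0 tg) (lt_le_trans gs s1).
  split; [exists t | exists s] => //; last by rewrite lerN2.
  - by rewrite t0 (ltW tg).
  - by rewrite s1 andbT (ltW gs).
move=> [g _]; case: ifP => // _ [[t /andP[t0 tg] ta] [s /andP[gs s1] bs]].
exists t, s; split => //; last by rewrite -lerN2.
rewrite lt_def (le_trans tg gs) andbT; apply/eqP => st.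
by move: bs; rewrite st lerN2 leNgt (le_lt_trans ta ab).
Qed.

End crossing_event.

Lemma measure_bigcup_ord_le {d} {T : measurableType d} {R : realType}
    (mu : {measure set T -> \bar R}) (F : nat -> set T) n (e : R) :
  (forall k, (k < n)%N -> measurable (F k)) ->
  (forall k, (k < n)%N -> (mu (F k) <= e%:E)%E) ->
  (mu (\bigcup_(k in `I_n) F k) <= (n%:R * e)%:E)%E.
Proof.
move=> mF muF; rewrite bigcup_mkord.
have mU : measurable (\big[setU/set0]_(k < n) F k).
  by apply: bigsetU_measurable => k _; exact: mF.
apply: le_trans (content_subadditive mu mF mU (fun _ => id)) _.
apply: (@le_trans _ _ (\sum_(k < n) e%:E)).
  by apply: lee_sum => k _; exact: muF.
by rewrite sumEFin sumr_const card_ord mulr_natl.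
Qed.

Section crossing_probability.
Context {d : measure_display} {T : measurableType d} {R : realType}.
Context (P : probability T R) {X : R -> T -> R} {a b eps : R}.
Hypothesis mX : forall t, 0 <= t <= 1 -> measurable_fun setT (X t).
Hypothesis cX : forall w, {within `[0, 1], continuous (X^~ w)}.
Hypothesis ab : a < b.
Hypothesis small_I : forall t, 0 <= t <= 1 -> (P (X t @^-1` `]a, b[) <= eps%:E)%E.

Let A := [set w | crosses (X^~ w) a b].

Lemma crosses_prob_le_modulus :
  (P A <= P [set w | ((b - a)%:E <= modulus X 1 w)%E])%E.
Proof.
apply: le_measure; rewrite ?inE; first exact: measurable_crosses.
  exact: measurable_modulus_ge.
exact: crosses_sub_modulus.
Qed.

Lemma crosses_prob_le_modulus_grid n :
  (P A <= P [set w | ((b - a)%:E <= modulus X n.+1%:R^-1 w)%E]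
          + (n.+2%:R * eps)%:E)%E.
Proof.
have mM := measurable_modulus_ge X mX cX (b - a) n.+1%:R^-1.
have mG k : (k < n.+2)%N -> measurable (X (grid n k) @^-1` `]a, b[).
  by move=> kn; apply: measurable_marginal_preimage => //; exact: grid_itv.
apply: le_trans (le_measure _ _ _ (crosses_sub_modulus_grid X n ab)) _.
- by rewrite inE; exact: measurable_crosses.
- by rewrite inE; apply: measurableU => //; exact: bigcup_measurable.
apply: le_trans (measureU2 _ mM (bigcup_measurable mG)) _; apply: leeD => //.
by apply: measure_bigcup_ord_le => // k kn; apply: small_I; exact: grid_itv.
Qed.

End crossing_probability.

Theorem lemma4p20 (R : realType) (alpha C : R) :
  0 < alpha -> 0 < C ->
  exists K : R, 0 < K /\
  forall (d : measure_display) (T : measurableType d) (P : probability T R)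
         (beta a b eps : R) (X : R -> T -> R),
    0 < beta -> a < b ->
    (forall t, 0 <= t <= 1 -> measurable_fun setT (X t)) ->
    (forall w, {within `[0, 1]%classic, continuous (fun t : R => X t w)}) ->
    (forall t, 0 <= t <= 1 -> (P (X t @^-1` `]a, b[%classic) <= eps%:E)%E) ->
    (forall theta delta : R, 0 < theta -> 0 < delta ->
       (P [set w | (theta%:E <= modulus X delta w)%E]
         <= (C * (delta `^ alpha) / (theta `^ beta))%:E)%E) ->
    (P [set w | (1 <= upcrossings X a b w)%E]
       <= (K * (eps `^ alpha / (b - a) `^ beta) `^ (alpha + 1)^-1)%:E)%E.
Proof.
move=> alpha0 C0; exists (C + 3); split; first by rewrite addr_gt0.
move=> d T P beta a b eps X beta0 ab mX cX small_I modulus_tail.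
have -> : [set w | (1 <= upcrossings X a b w)%E] = [set w | crosses (X^~ w) a b].
  by apply/seteqP; split=> w /upcrossings_ge1.
have mA := measurable_crosses X mX cX ab.
have eps0 : 0 <= eps.
  by rewrite -lee_fin; apply: le_trans (small_I 0 _); rewrite ?lexx ?ler01.
have ba0 : 0 < b - a by rewrite subr_gt0.
rewrite -(fineK (fin_num_measure P _ mA)) lee_fin.
apply: le_powR_balance; rewrite ?invr_gt0 ?powR_gt0 ?(ltW C0) //.
  rewrite -lee_fin fineK ?fin_num_measure //.
  apply: le_trans (crosses_prob_le_modulus P mX cX ab) _.
  by have := modulus_tail _ _ ba0 ltr01; rewrite powR1 mulr1.
move=> n; rewrite -lee_fin fineK ?fin_num_measure // EFinD.
apply: le_trans (crosses_prob_le_modulus_grid P mX cX ab small_I n) _.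
by rewrite leeD2r // modulus_tail ?invr_gt0.
Qed.
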